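(* Let $S$ be an intra-regular semigroup and $A=(\mu_A,\nu_A)$ an IF subset of $S$. Then $A$ is an IF ideal of $S$ if and only if $\underline{A}$ is a semiprime ideal of the semigroup $(\underline{S},\circ)$.
   Context: A semigroup $S$ is intra-regular if for every $x\in S$ there are $a,b\in S$ with $x=ax^2b$. An intuitionistic fuzzy (IF) subset of $S$ is a pair $A=(\mu_A,\nu_A)$ of functions $S\to[0,1]$ with $\mu_A(x)+\nu_A(x)\le1$ for all $x$. $A$ is an IF ideal of $S$ if $\mu_A(xy)\ge\max\{\mu_A(x),\mu_A(y)\}$ and $\nu_A(xy)\le\min\{\nu_A(x),\nu_A(y)\}$ for all $x,y\in S$. For $x\in S$ and $\alpha,\beta\in[0,1]$ with $\alpha+\beta\le1$, the IF point $x_{(\alpha,\beta)}$ is the IF subset of $S$ with value $(\alpha,\beta)$ at $x$ and $(0,1)$ elsewhere (so all points $x_{(0,1)}$ coincide). $\underline{S}$ is the set of all IF points of $S$; it is a semigroup under $x_{(\alpha,\beta)}\circ y_{(\gamma,\delta)}=(xy)_{(\min(\alpha,\gamma),\max(\beta,\delta))}$. For an IF subset $A$, $\underline{A}=\{x_{(\alpha,\beta)}\in\underline{S}:\mu_A(x)\ge\alpha,\ \nu_A(x)\le\beta\}$. In a semigroup $T$, an ideal is a non-empty $I\subseteq T$ with $TI\subseteq I$ and $IT\subseteq I$; here a semiprime ideal of $T$ means an ideal $I$ such that for every $t\in T$, $t^2\in I$ implies $t\in I$. *)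

From Stdlib Require Import Reals Classical ClassicalEpsilon FunctionalExtensionality.
Open Scope R_scope.

Definition IFset (S : Type) : Type := ((S -> R) * (S -> R))%type.

Definition is_IF_subset {S : Type} (A : IFset S) : Prop :=
  forall x, 0 <= fst A x <= 1 /\ 0 <= snd A x <= 1 /\ fst A x + snd A x <= 1.

Definition is_IF_ideal {S : Type} (mul : S -> S -> S) (A : IFset S) : Prop :=
  forall x y, fst A (mul x y) >= Rmax (fst A x) (fst A y) /\
              snd A (mul x y) <= Rmin (snd A x) (snd A y).

Definition intra_regular {S : Type} (mul : S -> S -> S) : Prop :=
  forall x, exists a b, x = mul (mul a (mul x x)) b.

Definition adm (a b : R) : Prop := 0 <= a <= 1 /\ 0 <= b <= 1 /\ a + b <= 1.

Definition ifpt {S : Type} (x : S) (a b : R) : IFset S :=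
  (fun z => if excluded_middle_informative (z = x) then a else 0,
   fun z => if excluded_middle_informative (z = x) then b else 1).

Definition IFpoints (S : Type) : IFset S -> Prop :=
  fun P => exists x a b, adm a b /\ P = ifpt x a b.

Definition underline {S : Type} (A : IFset S) : IFset S -> Prop :=
  fun P => exists x a b, adm a b /\ P = ifpt x a b /\ fst A x >= a /\ snd A x <= b.

(* The product on S_:  x_(a,b) o y_(c,d) = (xy)_(min(a,c), max(b,d)).
   Ideal of (S_, o): non-empty subset I of S_ with S_ o I ⊆ I and I o S_ ⊆ I. *)
Definition is_ideal_points {S : Type} (mul : S -> S -> S) (I : IFset S -> Prop) : Prop :=
  (forall P, I P -> IFpoints S P) /\
  (exists P, I P) /\
  (forall x a b y c d, adm a b -> adm c d ->
     I (ifpt y c d) -> I (ifpt (mul x y) (Rmin a c) (Rmax b d))) /\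
  (forall x a b y c d, adm a b -> adm c d ->
     I (ifpt x a b) -> I (ifpt (mul x y) (Rmin a c) (Rmax b d))).

Definition is_semiprime_ideal_points {S : Type} (mul : S -> S -> S) (I : IFset S -> Prop) : Prop :=
  is_ideal_points mul I /\
  (forall x a b, adm a b ->
     I (ifpt (mul x x) (Rmin a a) (Rmax b b)) -> I (ifpt x a b)).

(* Membership of an IF point x_(a,b) in the underline of A is just the pair of
   inequalities a <= mu_A x, nu_A x <= b.  So the two ideal conditions on the
   points say exactly that mu_A grows and nu_A shrinks under multiplication on
   either side, which is the definition of an IF ideal.  Semiprimeness comes for
   free from intra-regularity: writing x = a x^2 b, an IF ideal satisfies
   mu_A x >= mu_A x^2 and nu_A x <= nu_A x^2. *)

From Stdlib Require Import Reals Lra ClassicalEpsilon.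
Open Scope R_scope.

Lemma adm_Rmin_Rmax a b c d : adm a b -> adm c d -> adm (Rmin a c) (Rmax b d).
Proof.
  unfold adm, Rmin, Rmax; intros Hab Hcd.
  destruct (Rle_dec a c), (Rle_dec b d); lra.
Qed.

Lemma Rmin_Rmax_idem a b : Rmin a a = a /\ Rmax b b = b.
Proof. split; [apply Rmin_left | apply Rmax_left]; apply Rle_refl. Qed.

Section Underline.

Variables (S : Type) (mul : S -> S -> S) (A : IFset S).
Hypothesis hA : is_IF_subset A.

Lemma adm_IF_values x : adm (fst A x) (snd A x).
Proof. destruct (hA x) as [? [? ?]]; unfold adm; lra. Qed.

(* The membership of an IF point is read off at its support, except that the
   point x_(0,1) (equal to every y_(0,1)) must be handled via the bounds on A. *)
Lemma underline_ifpt y c d :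
  adm c d -> (underline A (ifpt y c d) <-> fst A y >= c /\ snd A y <= d).
Proof.
  intros Hcd; split.
  - intros (x & a & b & Hab & E & Hmu & Hnu).
    pose proof (f_equal (fun P => fst P y) E) as Emu.
    pose proof (f_equal (fun P => snd P y) E) as Enu.
    unfold ifpt in Emu, Enu; simpl in Emu, Enu.
    destruct (excluded_middle_informative (y = y)) as [_ | ]; [| congruence].
    destruct (excluded_middle_informative (y = x)) as [-> | _]; subst.
    + split; assumption.
    + destruct (hA y) as [? [? ?]]; lra.
  - intros [Hmu Hnu]. exists y, c, d; repeat split; auto; apply Hcd.
Qed.

Lemma underline_ifpt_values x : underline A (ifpt x (fst A x) (snd A x)).
Proof.
  apply underline_ifpt; [apply adm_IF_values | split; [apply Rge_refl | apply Rle_refl]].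
Qed.

Lemma underline_sub_IFpoints P : underline A P -> IFpoints S P.
Proof. intros (x & a & b & Hab & E & _). exists x, a, b; auto. Qed.

Lemma underline_nonempty : inhabited S -> exists P, underline A P.
Proof. intros [s]. exists (ifpt s (fst A s) (snd A s)); apply underline_ifpt_values. Qed.

Lemma IF_ideal_mulr x y :
  is_IF_ideal mul A -> fst A (mul x y) >= fst A y /\ snd A (mul x y) <= snd A y.
Proof.
  intros HI; destruct (HI x y) as [Hmu Hnu].
  pose proof (Rmax_r (fst A x) (fst A y)); pose proof (Rmin_r (snd A x) (snd A y)); lra.
Qed.

Lemma IF_ideal_mull x y :
  is_IF_ideal mul A -> fst A (mul x y) >= fst A x /\ snd A (mul x y) <= snd A x.
Proof.
  intros HI; destruct (HI x y) as [Hmu Hnu].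
  pose proof (Rmax_l (fst A x) (fst A y)); pose proof (Rmin_l (snd A x) (snd A y)); lra.
Qed.

Lemma IF_ideal_underline_ideal :
  inhabited S -> is_IF_ideal mul A -> is_ideal_points mul (underline A).
Proof.
  intros hne HI.
  split; [exact underline_sub_IFpoints | split; [exact (underline_nonempty hne) |]].
  split; intros x a b y c d Hab Hcd Hmem;
    apply underline_ifpt in Hmem; auto; apply underline_ifpt; auto using adm_Rmin_Rmax.
  - destruct (IF_ideal_mulr x y HI).
    pose proof (Rmin_r a c); pose proof (Rmax_r b d); lra.
  - destruct (IF_ideal_mull x y HI).
    pose proof (Rmin_l a c); pose proof (Rmax_l b d); lra.
Qed.

Lemma IF_ideal_square_le (hS : intra_regular mul) x :
  is_IF_ideal mul A -> fst A x >= fst A (mul x x) /\ snd A x <= snd A (mul x x).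
Proof.
  intros HI; destruct (hS x) as (p & q & Ex).
  destruct (IF_ideal_mull (mul p (mul x x)) q HI) as [Hmu1 Hnu1].
  destruct (IF_ideal_mulr p (mul x x) HI) as [Hmu2 Hnu2].
  rewrite <- Ex in Hmu1, Hnu1; lra.
Qed.

Lemma IF_ideal_underline_semiprime (hS : intra_regular mul) x a b :
  is_IF_ideal mul A -> adm a b ->
  underline A (ifpt (mul x x) (Rmin a a) (Rmax b b)) -> underline A (ifpt x a b).
Proof.
  intros HI Hab Hmem.
  destruct (Rmin_Rmax_idem a b) as [Ea Eb]; rewrite Ea, Eb in Hmem.
  apply underline_ifpt in Hmem; auto; apply underline_ifpt; auto.
  destruct (IF_ideal_square_le hS x HI); lra.
Qed.

(* Test the ideal conditions on x_(1,0) o y_(mu y, nu y) and its mirror image. *)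
Lemma underline_ideal_IF_ideal : is_ideal_points mul (underline A) -> is_IF_ideal mul A.
Proof.
  intros (_ & _ & HL & HR) x y.
  assert (H10 : adm 1 0) by (unfold adm; lra).
  pose proof (adm_IF_values x) as Hx; pose proof (adm_IF_values y) as Hy.
  pose proof (HL x 1 0 y _ _ H10 Hy (underline_ifpt_values y)) as Hmy.
  pose proof (HR x _ _ y 1 0 Hx H10 (underline_ifpt_values x)) as Hmx.
  apply underline_ifpt in Hmy; auto using adm_Rmin_Rmax.
  apply underline_ifpt in Hmx; auto using adm_Rmin_Rmax.
  destruct Hx as [? [? ?]], Hy as [? [? ?]].
  rewrite Rmin_right, Rmax_right in Hmy by lra.
  rewrite Rmin_left, Rmax_left in Hmx by lra.
  split; [apply Rle_ge, Rmax_lub | apply Rmin_glb]; lra.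
Qed.

End Underline.

Theorem theorem3p19 (S : Type) (mul : S -> S -> S)
  (assoc : forall x y z, mul x (mul y z) = mul (mul x y) z)
  (hne : inhabited S) (hS : intra_regular mul) (A : IFset S) (hA : is_IF_subset A) :
  is_IF_ideal mul A <-> is_semiprime_ideal_points mul (underline A).
Proof.
  split.
  - intros HI; split.
    + exact (IF_ideal_underline_ideal _ _ _ hA hne HI).
    + intros x a b; exact (IF_ideal_underline_semiprime _ _ _ hA hS x a b HI).
  - intros [Hideal _]; exact (underline_ideal_IF_ideal _ _ _ hA Hideal).
Qed.
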